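(* Let $G_1,\dots,G_k$ be finite connected graphs and $G=G_1\Box G_2\Box\cdots\Box G_k$. If each distance matrix $D(G_i)$, $i=1,\dots,k$, has constant row sums, then (a) $n_-(D(G))=\sum_{i=1}^k n_-(D(G_i))$, and (b) $n_+(D(G))=1+\sum_{i=1}^k\bigl(n_+(D(G_i))-1\bigr)$.
   Context: For a connected graph $G$ with vertices $v_1,\dots,v_n$, the distance matrix $D(G)$ is the $n\times n$ matrix with $(i,j)$ entry equal to the graph distance $d(v_i,v_j)$. For a real symmetric matrix $M$, $n_+(M)$ and $n_-(M)$ denote the numbers of positive and negative eigenvalues counted with multiplicity. The Cartesian product $G_1\Box\cdots\Box G_k$ has vertex set $V(G_1)\times\cdots\times V(G_k)$, with $(x_1,\dots,x_k)$ adjacent to $(y_1,\dots,y_k)$ iff for some $j$, $x_j$ is adjacent to $y_j$ in $G_j$ and $x_i=y_i$ for all $i\ne j$. *)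

From HB Require Import structures.
From mathcomp Require Import all_boot all_order all_algebra.
From mathcomp Require Import polyrcf.
Set Implicit Arguments. Unset Strict Implicit. Unset Printing Implicit Defensive.
Import Order.TTheory GRing.Theory Num.Theory.
Local Open Scope ring_scope.

Definition simple_graph (V : finType) (e : rel V) : Prop :=
  symmetric e /\ irreflexive e.

Definition connected_graph (V : finType) (e : rel V) : Prop :=
  forall x y : V, connect e x y.

Fixpoint nwalk (V : finType) (e : rel V) (n : nat) (x y : V) : bool :=
  if n is n'.+1 then [exists z, e x z && nwalk e n' z y] else x == y.

(* Graph distance: least n with a walk of length n from x to y (for a
   connected graph such n exists and is < #|V|). *)
Definition gdist (V : finType) (e : rel V) (x y : V) : nat :=
  find (fun n => nwalk e n x y) (iota 0 #|V|).

Definition distmx (R : nzRingType) (V : finType) (e : rel V) : 'M[R]_#|V| :=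
  \matrix_(i, j) (gdist e (enum_val i) (enum_val j))%:R.

Definition cprod_rel (k : nat) (V : 'I_k -> finType)
  (e : forall i, rel (V i)) : rel {dffun forall i, V i} :=
  fun x y => [exists j, e j (x j) (y j) && [forall i, (i != j) ==> (x i == y i)]].

Definition n_pos (R : rcfType) (n : nat) (M : 'M[R]_n) : nat :=
  \sum_(x <- rootsR (char_poly M) | 0 < x) mup x (char_poly M).
Definition n_neg (R : rcfType) (n : nat) (M : 'M[R]_n) : nat :=
  \sum_(x <- rootsR (char_poly M) | x < 0) mup x (char_poly M).

Definition const_row_sums (R : nzRingType) (n : nat) (M : 'M[R]_n) : Prop :=
  exists c : R, forall i, \sum_j M i j = c.

(* Let D_i = D(G_i), n_i = |V(G_i)|, and t_i the common row sum of D_i, which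
   is also its column sum since D_i is symmetric.  Then D_i = (t_i/n_i) J + F_i
   where F_i has zero column sums, and as distances add up over the factors of
   a Cartesian product, D(G) = c J + sum_i C_i with c = sum_i t_i/n_i and
   C_i(x, y) = F_i(x_i, y_i).  The products J C_i and C_i C_j (i <> j) vanish,
   and M N = 0 implies X^n chi(M + N) = chi(M) chi(N); hence, up to powers of X,
   chi(D(G)) = (X - c N) prod_i chi(C_i), where N = |V(G)|.  Next C_i = P F_i P^T
   for the incidence matrix P of the i-th projection, and P^T P = (N/n_i) I, so
   chi(C_i) and chi((N/n_i) F_i) agree up to powers of X, while
   X chi(D_i) = (X - t_i) chi(F_i).  Since t_i > 0 and c > 0, counting negative
   roots gives (a) and counting positive roots gives (b). *)

From HB Require Import structures.
From mathcomp Require Import all_boot all_order all_algebra.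
From mathcomp Require Import polyrcf.
Import Order.TTheory GRing.Theory Num.Theory.

Set Implicit Arguments.
Unset Strict Implicit.
Unset Printing Implicit Defensive.

Section GraphDistance.
Variables (V : finType) (e : rel V).
Implicit Types x y z : V.

Lemma nwalkP n x y :
  reflect (exists p, [/\ size p = n, path e x p & last x p = y]) (nwalk e n x y).
Proof.
elim: n x => [|n IHn] x /=.
  apply: (iffP eqP) => [<-|[p [sp _ <-]]]; first by exists [::].
  by case: p sp.
apply: (iffP existsP) => [[z /andP[exz /IHn[p [sp pp lp]]]]|[p [sp pp lp]]].
  by exists (z :: p); rewrite /= sp exz pp lp.
case: p sp pp lp => [|z p] //= [sp] /andP[exz pp] lp.
by exists z; rewrite exz; apply/IHn; exists p.
Qed.

Lemma nwalk_connect n x y : nwalk e n x y -> connect e x y.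
Proof. by move/nwalkP => [p [_ pp lp]]; apply/connectP; exists p. Qed.

Lemma connect_nwalk x y : connect e x y -> exists2 n, n < #|V| & nwalk e n x y.
Proof.
move/connectP => [p pp ->]; have [p' pp' up' _] := shortenP pp.
exists (size p'); last by apply/nwalkP; exists p'.
by have := max_card (mem (x :: p')); rewrite (card_uniqP up').
Qed.

Lemma nwalk_sym n x y : symmetric e -> nwalk e n x y = nwalk e n y x.
Proof.
move=> se; wlog suff: x y / nwalk e n x y -> nwalk e n y x.
  by move=> sym; apply/idP/idP; apply: sym.
move=> /nwalkP[p [sp pp lp]]; apply/nwalkP; exists (rev (belast x p)); split.
- by rewrite size_rev size_belast.
- by rewrite -lp rev_path (eq_path (e' := e)) // => a b /=; rewrite se.
- by rewrite -lp; case: (p) => //= z q; rewrite rev_cons last_rcons.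
Qed.

Lemma gdist_le n x y : nwalk e n x y -> gdist e x y <= n.
Proof.
move=> wn; rewrite /gdist; have [nV|Vn] := ltnP n #|V|; last first.
  by apply: leq_trans (find_size _ _) _; rewrite size_iota.
by rewrite leqNgt; apply/negP => /(before_find 0); rewrite nth_iota // add0n wn.
Qed.

Lemma nwalk_gdist x y : connect e x y -> nwalk e (gdist e x y) x y.
Proof.
move=> /connect_nwalk[n nV wn].
have has_walk : has (fun n => nwalk e n x y) (iota 0 #|V|).
  by apply/hasP; exists n; rewrite ?mem_iota.
have := nth_find 0 has_walk.
by rewrite has_find size_iota in has_walk; rewrite nth_iota.
Qed.

Lemma gdistxx x : gdist e x x = 0.
Proof. by apply/eqP; rewrite -leqn0; apply: gdist_le; rewrite /= eqxx. Qed.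

Lemma gdistC x y : symmetric e -> gdist e x y = gdist e y x.
Proof. by move=> se; apply: eq_find => n; rewrite nwalk_sym. Qed.

Lemma gdist_edge x z y :
  connect e z y -> e x z -> gdist e x y <= (gdist e z y).+1.
Proof.
move=> czy exz; apply: gdist_le => /=.
by apply/existsP; exists z; rewrite exz nwalk_gdist.
Qed.

Lemma gdist_descent x y : connect e x y -> x != y ->
  exists2 z, e x z & gdist e x y = (gdist e z y).+1.
Proof.
move=> cxy; have := nwalk_gdist cxy.
case dxy: (gdist e x y) => [|n] /=; first by move/eqP->; rewrite eqxx.
move=> /existsP[z /andP[exz wz]] _; exists z => //; apply/eqP.
by rewrite eqn_leq -{1}dxy gdist_edge ?(nwalk_connect wz) // ltnS gdist_le.
Qed.

Lemma gdist_unique (d : V -> V -> nat) y :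
  d y y = 0 ->
  (forall x, x != y -> exists2 z, e x z & d x y = (d z y).+1) ->
  (forall x z, e x z -> d x y <= (d z y).+1) ->
  forall x, gdist e x y = d x y.
Proof.
move=> dyy down up.
have walk n x : d x y = n -> nwalk e n x y.
  elim: n x => [|n IHn] x /=; case: (eqVneq x y) => [->|/down[z exz ->]] //.
    by rewrite dyy.
  by move=> [dzy]; apply/existsP; exists z; rewrite exz IHn.
have le_walk n x : nwalk e n x y -> d x y <= n.
  elim: n x => [|n IHn] x /=; first by move/eqP->; rewrite dyy.
  move=> /existsP[z /andP[exz wz]].
  by apply: leq_trans (up _ _ exz) _; rewrite ltnS IHn.
move=> x; have wx := walk _ x erefl.
apply/eqP; rewrite eqn_leq gdist_le //=.
by rewrite le_walk // nwalk_gdist // (nwalk_connect wx).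
Qed.

End GraphDistance.

Definition upd (k : nat) (V : 'I_k -> finType) (x : {dffun forall i, V i})
    i (y : V i) : {dffun forall i, V i} :=
  [ffun j => dfwith (fun j => x j) y j].
Arguments upd {k V} x i y.

Section CartesianProduct.
Variables (k : nat) (V : 'I_k -> finType) (e : forall i, rel (V i)).
Arguments e : clear implicits.
Local Notation X := {dffun forall i, V i}.
Implicit Types x z : X.

Lemma upd_same x i y : upd x i y i = y.
Proof. by rewrite ffunE dfwith_in. Qed.

Lemma upd_other x i y j : i != j -> upd x i y j = x j.
Proof. by move=> ij; rewrite ffunE dfwith_out. Qed.

Lemma upd_id x i : upd x i (x i) = x.
Proof.
by apply/ffunP => j; case: (eqVneq i j) => [<-|ij]; rewrite ?upd_same ?upd_other.
Qed.

Lemma upd_upd x i y y' : upd (upd x i y) i y' = upd x i y'.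
Proof.
by apply/ffunP => j; case: (eqVneq i j) => [<-|ij]; rewrite ?upd_same ?upd_other.
Qed.

Lemma cprod_relP x z :
  reflect (exists j : 'I_k, e j (x j) (z j) /\ forall i, i != j -> x i = z i)
          (cprod_rel e x z).
Proof.
apply: (iffP existsP) => [[j /andP[exz /forallP eq_xz]]|[j [exz eq_xz]]].
  by exists j; split=> // i ij; apply/eqP; have /implyP := eq_xz i; apply.
by exists j; rewrite exz; apply/forallP => i; apply/implyP => ij; rewrite eq_xz.
Qed.

Hypothesis connected_e : forall i, connected_graph (e i).

Lemma gdist_cprod (x y : X) :
  gdist (cprod_rel e) x y = (\sum_i gdist (e i) (x i) (y i))%N.
Proof.
apply: (gdist_unique (d := fun x y => \sum_i gdist (e i) (x i) (y i))%N) => {x}.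
- by rewrite big1 // => i _; rewrite gdistxx.
- move=> x xy; have /existsP[j xyj] : [exists j, x j != y j].
    apply: contraNT xy => /existsPn same; apply/eqP/ffunP => j.
    by apply/eqP/negPn; exact: same.
  have [z exz dxz] := gdist_descent (connected_e (x j) (y j)) xyj.
  exists (upd x j z).
    apply/cprod_relP; exists j; rewrite upd_same; split=> // i ij.
    by rewrite upd_other // eq_sym.
  rewrite (bigD1 j) //= [in RHS](bigD1 j) //= upd_same dxz addSn.
  by congr (_ + _).+1; apply: eq_bigr => i ij; rewrite upd_other // eq_sym.
- move=> x z /cprod_relP[j [exz same]].
  rewrite (bigD1 j) //= [s in _ <= s.+1](bigD1 j) //= -addSn.
  rewrite leq_add ?gdist_edge ?connected_e //.
  by apply: leq_sum => i ij; rewrite same.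
Qed.

End CartesianProduct.

Local Open Scope ring_scope.

Section CharPoly.
Variable R : comNzRingType.

Lemma Xn_neq0 n : 'X^n != 0 :> {poly R}.
Proof. by rewrite monic_neq0 ?monicXn. Qed.

Lemma char_poly_neq0 n (A : 'M[R]_n) : char_poly A != 0.
Proof. exact: monic_neq0 (char_poly_monic A). Qed.

(* Both sides are determinants of the block matrix [['X, A]; [B, 1]] after
   one elimination step, on the left or on the right. *)
Lemma char_poly_mulmxC m n (A : 'M[R]_(m, n)) (B : 'M[R]_(n, m)) :
  'X^n * char_poly (A *m B) = 'X^m * char_poly (B *m A).
Proof.
pose A' := map_mx polyC A; pose B' := map_mx polyC B.
pose K := block_mx ('X%:M : 'M_m) A' B' (1%:M : 'M_n).
have elimA : block_mx 1%:M (- A') 0 'X%:M *m K =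
    block_mx (char_poly_mx (A *m B)) 0 ('X%:M *m B') 'X%:M.
  rewrite mulmx_block /char_poly_mx map_mxM !mul1mx !mul0mx !mulmx1 !add0r.
  by rewrite mulNmx addrC subrr.
have elimB : block_mx 1%:M 0 (- B') 'X%:M *m K =
    block_mx 'X%:M A' 0 (char_poly_mx (B *m A)).
  rewrite mulmx_block /char_poly_mx map_mxM !mul1mx !mul0mx !mulmx1 !addr0.
  by rewrite mulNmx mul_mx_scalar mul_scalar_mx addNr mulNmx addrC.
move: (congr1 determinant elimA) (congr1 determinant elimB).
rewrite !det_mulmx !det_ublock !det_lblock !det_scalar !expr1n !mul1r.
by rewrite /char_poly [RHS in _ = RHS -> _]mulrC => <- ->.
Qed.

Lemma char_polyD_mulmx0 n (M N : 'M[R]_n) : M *m N = 0 ->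
  'X^n * char_poly (M + N) = char_poly M * char_poly N.
Proof.
move=> MN0.
have : char_poly_mx M *m char_poly_mx N = 'X%:M *m char_poly_mx (M + N).
  rewrite /char_poly_mx mulmxBl !mulmxBr -map_mxM MN0 map_mx0 subr0.
  rewrite map_mxD mulmxDr opprD addrA addrAC; congr (_ - _).
  by rewrite scalar_mxC.
by rewrite /char_poly -det_mulmx => ->; rewrite det_mulmx det_scalar.
Qed.

Lemma char_poly_big_mulmx0 (I : finType) n (M : 'M[R]_n) (N : I -> 'M[R]_n) :
  (forall i, M *m N i = 0) -> (forall i j, i != j -> N i *m N j = 0) ->
  'X^(n * #|I|) * char_poly (M + \sum_i N i) =
  char_poly M * \prod_i char_poly (N i).
Proof.
move=> MN0 NN0; rewrite cardT enumT; move: (index_enum_uniq I).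
rewrite [index_enum I]unlock; elim: (Finite.enum I) => [|i r IHr] /=.
  by rewrite !big_nil addr0 muln0 expr0 mul1r mulr1.
move=> /andP[ir ur].
have sumN0 : (M + \sum_(j <- r) N j) *m N i = 0.
  rewrite mulmxDl MN0 add0r mulmx_suml big_seq big1 // => j jr.
  by apply: NN0; apply: contraNneq ir => <-.
rewrite big_cons addrCA addrC mulnS exprD -mulrA mulrCA char_polyD_mulmx0 //.
by rewrite mulrA IHr // big_cons mulrAC -mulrA.
Qed.

Lemma char_poly_const n (b : R) :
  'X * char_poly (const_mx b : 'M[R]_n) = 'X^n * ('X - (b *+ n)%:P).
Proof.
have col_row : (const_mx b : 'M_(n, 1)) *m (const_mx 1 : 'M_(1, n)) = const_mx b.
  by apply/matrixP => i j; rewrite !mxE big_ord1 !mxE mulr1.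
have row_col : (const_mx 1 : 'M_(1, n)) *m (const_mx b : 'M_(n, 1)) =
    const_mx (b *+ n).
  apply/matrixP => i j; rewrite !mxE (eq_bigr (fun _ => b)).
    by rewrite sumr_const card_ord.
  by move=> l _; rewrite !mxE mul1r.
have := char_poly_mulmxC (const_mx b : 'M_(n, 1)) (const_mx 1 : 'M_(1, n)).
by rewrite col_row row_col expr1 /char_poly det_mx11 !mxE.
Qed.

End CharPoly.

Lemma char_polyZ (F : fieldType) n (c : F) (A : 'M[F]_n) : c != 0 ->
  char_poly (c *: A) = c ^+ n *: (char_poly A \Po (c^-1 *: 'X)).
Proof.
move=> cz; rewrite /char_poly -det_map_mx -mul_polyC rmorphXn /= -detZ.
congr (\det _); apply/matrixP => i j; rewrite !mxE comp_polyB comp_polyC.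
case: (i == j); rewrite ?mulr1n ?mulr0n /=.
  by rewrite comp_polyX mulrBr mul_polyC scalerA mulfV // scale1r -polyCM.
by rewrite comp_poly0 !sub0r mulrN polyCM.
Qed.

Section RootCount.
Variable R : rcfType.
Implicit Types (P : pred R) (p q : {poly R}) (c x : R).

(* By definition, n_neg M and n_pos M are nroots (< 0) and nroots (> 0) of
   char_poly M. *)
Definition nroots P p : nat := \sum_(x <- rootsR p | P x) mup x p.

Lemma mem_rootsR p x : p != 0 -> (x \in rootsR p) = root p x.
Proof. by move=> pz; rewrite -(roots_on_rootsR pz x). Qed.

Lemma nroots_seq P p (s : seq R) : p != 0 -> uniq s ->
  (forall x, root p x -> x \in s) -> nroots P p = \sum_(x <- s | P x) mup x p.
Proof.
move=> pz us sub_s; rewrite [RHS](bigID (root p)) /=.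
rewrite [X in _ = _ + X]big1 ?addr0 => [|x /andP[_]]; last exact: mupNroot.
rewrite /nroots -big_filter -[RHS]big_filter; apply/perm_big/uniq_perm.
- by rewrite filter_uniq ?uniq_roots.
- exact: filter_uniq.
move=> x; rewrite !mem_filter mem_rootsR //.
case rx: (root p x); last by rewrite !andbF.
by rewrite (sub_s x rx) !andbT.
Qed.

Lemma nrootsM P p q : p != 0 -> q != 0 ->
  nroots P (p * q) = (nroots P p + nroots P q)%N.
Proof.
move=> pz qz; pose s := undup (rootsR p ++ rootsR q).
have us : uniq s by apply: undup_uniq.
have sub_p x : root p x -> x \in s.
  by move=> rx; rewrite mem_undup mem_cat mem_rootsR // rx.
have sub_q x : root q x -> x \in s.
  by move=> rx; rewrite mem_undup mem_cat (mem_rootsR x qz) rx orbT.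
rewrite (nroots_seq P _ us) ?mulf_neq0 //; last first.
  by move=> x; rewrite rootM => /orP[/sub_p|/sub_q].
rewrite (nroots_seq P pz us sub_p) (nroots_seq P qz us sub_q) -big_split /=.
by apply: eq_bigr => x _; rewrite mupM.
Qed.

Lemma nroots_prod (I : Type) P (r : seq I) (F : I -> {poly R}) :
  (forall i, F i != 0) ->
  nroots P (\prod_(i <- r) F i) = (\sum_(i <- r) nroots P (F i))%N.
Proof.
move=> Fnz; elim: r => [|i r IHr].
  by rewrite !big_nil /nroots rootsRC big_nil.
rewrite !big_cons nrootsM ?IHr //.
by rewrite prodf_seq_neq0 (eq_all (a2 := predT)) ?all_predT // => j; rewrite Fnz.
Qed.

Lemma nroots_XsubC P c : nroots P ('X - c%:P) = P c.
Proof.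
rewrite (nroots_seq P (s := [:: c])) ?polyXsubC_eq0 //; last first.
  by move=> x; rewrite root_XsubC inE.
rewrite big_cons big_nil addr0 -[X in mup _ X]expr1 mup_XsubCX eqxx.
by case: (P c).
Qed.

Lemma nroots_Xn P n : ~~ P 0 -> nroots P 'X^n = 0%N.
Proof.
move=> nP0; rewrite (nroots_seq P (s := [:: 0])) ?monic_neq0 ?monicXn //.
  by rewrite big_cons big_nil (negbTE nP0).
by move=> x; rewrite /root hornerXn expf_eq0 inE => /andP[_].
Qed.

Lemma mupZ x c p : c != 0 -> mup x (c *: p) = mup x p.
Proof.
move=> cz; have [->|pz] := eqVneq p 0; first by rewrite scaler0.
have geq n : (n <= mup x (c *: p))%N = (n <= mup x p)%N.
  by rewrite !mup_geq ?dvdpZr // scaler_eq0 negb_or cz.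
by apply/eqP; rewrite eqn_leq geq leqnn -geq leqnn.
Qed.

Lemma nrootsZ P c p : c != 0 -> nroots P (c *: p) = nroots P p.
Proof.
move=> cz; have [->|pz] := eqVneq p 0; first by rewrite scaler0.
rewrite (nroots_seq P (s := rootsR p)) ?scaler_eq0 ?negb_or ?cz ?uniq_roots //.
  by apply: eq_bigr => x _; rewrite mupZ.
by move=> x; rewrite rootZ // -mem_rootsR.
Qed.

Lemma XsubC_comp_scale c x :
  ('X - (c * x)%:P) \Po (c *: 'X) = c *: ('X - x%:P).
Proof. by rewrite comp_polyB comp_polyX comp_polyC scalerBr polyCM mul_polyC. Qed.

Lemma dvdp_comp_scale c p q : c != 0 ->
  (p \Po (c *: 'X) %| q \Po (c *: 'X)) = (p %| q).
Proof.
move=> cz; apply/idP/idP; last exact: dvdp_comp_poly.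
have unscale r : (r \Po (c *: 'X)) \Po (c^-1 *: 'X) = r.
  rewrite -comp_polyA comp_polyZ comp_polyX scalerA divff //.
  by rewrite scale1r comp_polyXr.
by move=> /(dvdp_comp_poly (c^-1 *: 'X)); rewrite !unscale.
Qed.

Lemma comp_scale_eq0 c p : c != 0 -> (p \Po (c *: 'X) == 0) = (p == 0).
Proof. by move=> cz; rewrite comp_poly_eq0 // size_scale ?size_polyX. Qed.

Lemma mup_comp_scale x c p : c != 0 -> p != 0 ->
  mup x (p \Po (c *: 'X)) = mup (c * x) p.
Proof.
move=> cz pz; have pcz : p \Po (c *: 'X) != 0 by rewrite comp_scale_eq0.
have geq n : (n <= mup x (p \Po (c *: 'X)))%N = (n <= mup (c * x) p)%N.
  rewrite !mup_geq // -[RHS](dvdp_comp_scale _ _ cz).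
  rewrite (rmorphXn (comp_poly (c *: 'X))).
  by rewrite /= XsubC_comp_scale exprZn dvdpZl // expf_neq0.
by apply/eqP; rewrite eqn_leq geq leqnn -geq leqnn.
Qed.

Lemma nroots_comp_scale P c p : c != 0 -> (forall x, P (c * x) = P x) ->
  nroots P (p \Po (c *: 'X)) = nroots P p.
Proof.
move=> cz Pc; have [->|pz] := eqVneq p 0; first by rewrite comp_poly0.
have pcz : p \Po (c *: 'X) != 0 by rewrite comp_scale_eq0.
rewrite (nroots_seq P (s := map ( *%R c^-1) (rootsR p))) //; last 2 first.
- by rewrite map_inj_uniq ?uniq_roots //; apply: mulfI; rewrite invr_eq0.
- move=> x; rewrite /root horner_comp hornerZ hornerX => rx.
  by apply/mapP; exists (c * x); rewrite ?mulKf // mem_rootsR.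
rewrite big_map /nroots; apply: eq_big => [x|x _]; first by rewrite -Pc mulVKf.
by rewrite mup_comp_scale // mulVKf.
Qed.

Lemma nroots_char_poly_const P n (a : R) :
  ~~ P 0 -> nroots P (char_poly (const_mx a : 'M_n)) = P (a *+ n).
Proof.
move=> nP0; have := congr1 (nroots P) (char_poly_const n a).
rewrite !nrootsM ?polyX_eq0 ?polyXsubC_eq0 ?char_poly_neq0 ?Xn_neq0 //.
by rewrite -['X]expr1 !nroots_Xn // nroots_XsubC.
Qed.

End RootCount.

Section FunMatrix.
Variable R : comNzRingType.

(* By definition, distmx R e is fun_mx (fun x y => (gdist e x y)%:R). *)
Definition fun_mx (T U : finType) (f : T -> U -> R) : 'M[R]_(#|T|, #|U|) :=
  \matrix_(i, j) f (enum_val i) (enum_val j).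

Definition incidence_mx (T U : finType) (pi : T -> U) : 'M[R]_(#|T|, #|U|) :=
  fun_mx (fun x y => (pi x == y)%:R).

Lemma eq_fun_mx (T U : finType) (f g : T -> U -> R) :
  (forall x y, f x y = g x y) -> fun_mx f = fun_mx g.
Proof. by move=> fg; apply/matrixP => i j; rewrite !mxE fg. Qed.

Lemma sum_enum_val (T : finType) (F : T -> R) :
  \sum_(i < #|T|) F (enum_val i) = \sum_x F x.
Proof. by rewrite -big_enum_val. Qed.

Lemma fun_mxM (T U W : finType) (f : T -> U -> R) (g : U -> W -> R) :
  fun_mx f *m fun_mx g = fun_mx (fun x z => \sum_y f x y * g y z).
Proof.
apply/matrixP => i j; rewrite !mxE -[RHS]sum_enum_val.
by apply: eq_bigr => l _; rewrite !mxE.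
Qed.

Lemma fun_mx_row_sum (T : finType) (f : T -> T -> R) c :
  (forall i, \sum_j fun_mx f i j = c) -> forall x, \sum_y f x y = c.
Proof.
move=> row_c x; rewrite -(row_c (enum_rank x)) -sum_enum_val.
by apply: eq_bigr => j _; rewrite mxE enum_rankK.
Qed.

Lemma tr_fun_mx (T U : finType) (f : T -> U -> R) :
  (fun_mx f)^T = fun_mx (fun y x => f x y).
Proof. by apply/matrixP => i j; rewrite !mxE. Qed.

Lemma fun_mxD (T U : finType) (f g : T -> U -> R) :
  fun_mx (fun x y => f x y + g x y) = fun_mx f + fun_mx g.
Proof. by apply/matrixP => i j; rewrite !mxE. Qed.

Lemma fun_mx_sum (T U : finType) (I : Type) (r : seq I) (F : I -> T -> U -> R) :
  fun_mx (fun x y => \sum_(l <- r) F l x y) = \sum_(l <- r) fun_mx (F l).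
Proof.
by apply/matrixP => i j; rewrite !mxE summxE; apply: eq_bigr => l _; rewrite mxE.
Qed.

Lemma fun_mx_const (T U : finType) (c : R) :
  fun_mx (fun (_ : T) (_ : U) => c) = const_mx c.
Proof. by apply/matrixP => i j; rewrite !mxE. Qed.

Lemma fun_mx_eq0 (T U : finType) (f : T -> U -> R) :
  (forall x y, f x y = 0) -> fun_mx f = 0.
Proof. by move=> f0; apply/matrixP => i j; rewrite !mxE f0. Qed.

Lemma sum_delta (T : finType) (t : T) (F : T -> R) :
  \sum_y (t == y)%:R * F y = F t.
Proof.
rewrite (bigD1 t) //= eqxx mul1r big1 ?addr0 // => y yt.
by rewrite eq_sym (negbTE yt) mul0r.
Qed.

Lemma fun_mx_pullback (T U : finType) (pi : T -> U) (F : U -> U -> R) :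
  fun_mx (fun x x' => F (pi x) (pi x')) =
  incidence_mx pi *m fun_mx F *m (incidence_mx pi)^T.
Proof.
rewrite tr_fun_mx !fun_mxM; apply: eq_fun_mx => x x'.

under eq_bigr do rewrite sum_delta mulrC.
by rewrite sum_delta.
Qed.

Lemma incidence_mx_gram (T U : finType) (pi : T -> U) (m : R) :
  (forall y, \sum_x (pi x == y)%:R = m) ->
  (incidence_mx pi)^T *m incidence_mx pi = m%:M.
Proof.
move=> fiber; rewrite tr_fun_mx fun_mxM; apply/matrixP => i j; rewrite !mxE.
case: (eqVneq i j) => [<-|ij].
  rewrite mulr1n -(fiber (enum_val i)); apply: eq_bigr => x _.
  by case: eqP; rewrite ?mulr1 ?mulr0.
rewrite mulr0n big1 // => x _.
case: (eqVneq (pi x) (enum_val i)) => [->|]; last by rewrite mul0r.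
by rewrite (inj_eq enum_val_inj) (negbTE ij) mulr0.
Qed.

End FunMatrix.

Section Fibers.
Variables (R : nzRingType) (k : nat) (V : 'I_k -> finType).
Local Notation X := {dffun forall i, V i}.
Implicit Types (i : 'I_k) (x : X) (phi : X -> R).

Lemma card_dffun_gt0 : (forall i, 0 < #|V i|)%N -> (0 < #|X|)%N.
Proof.
by move=> V_gt0; apply/card_gt0P; exists [ffun i => enum_val (Ordinal (V_gt0 i))].
Qed.

Lemma sum_fiber_eq i phi (y y' : V i) :
  (forall x w, phi (upd x i w) = phi x) ->
  \sum_(x : X | x i == y) phi x = \sum_(x : X | x i == y') phi x.
Proof.
move=> phi_upd.
rewrite (reindex_onto (fun x => upd x i y) (fun x => upd x i y')); last first.
  by move=> x /eqP <-; rewrite upd_upd upd_id.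
apply: eq_big => [x|x _]; last by rewrite phi_upd.
rewrite upd_same eqxx upd_upd.
by apply/eqP/eqP => [<-|<-]; rewrite ?upd_same ?upd_id.
Qed.

Lemma fiber_size_eq i (y y' : V i) :
  \sum_(x : X) (x i == y)%:R = \sum_(x : X) (x i == y')%:R :> R.
Proof.
have fiber_sum (z : V i) :
    \sum_(x : X) (x i == z)%:R = \sum_(x : X | x i == z) 1 :> R.
  by rewrite [RHS]big_mkcond; apply: eq_bigr => x _; case: eqP.
by rewrite !fiber_sum; apply: sum_fiber_eq.
Qed.

Lemma sum_mul_coord_eq0 i phi (h : V i -> R) :
  (forall x w, phi (upd x i w) = phi x) -> \sum_w h w = 0 ->
  \sum_x phi x * h (x i) = 0.
Proof.
move=> phi_upd h0; have [x0 _|X0] := pickP (@predT X); last first.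
  by apply: big1 => x; have := X0 x.
rewrite (partition_big (fun x : X => x i) predT) //=.
transitivity (\sum_w (\sum_(x : X | x i == x0 i) phi x) * h w).
  apply: eq_bigr => w _; rewrite (sum_fiber_eq (x0 i) w phi_upd) mulr_suml.
  by apply: eq_bigr => x /eqP ->.
by rewrite -mulr_sumr h0 mulr0.
Qed.

End Fibers.

Lemma sum_div_card (R : fieldType) (T : finType) (c : R) : #|T|%:R != 0 :> R ->
  \sum_(x : T) c / #|T|%:R = c.
Proof. by move=> nz; rewrite sumr_const -[c / _ *+ _]mulr_natr divfK. Qed.

Lemma psumr_gt0 (R : numDomainType) (I : finType) (F : I -> R) i0 :
  (forall i, 0 <= F i) -> 0 < F i0 -> 0 < \sum_i F i.
Proof. by move=> F_ge0 Fi0; rewrite (bigD1 i0) //= ltr_pwDl // sumr_ge0. Qed.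

Section CartesianSum.
Variables (R : rcfType) (k : nat) (V : 'I_k -> finType).
Variables (f : forall i, V i -> V i -> R) (t : 'I_k -> R).
Arguments f : clear implicits.
Hypothesis V_gt0 : forall i, (0 < #|V i|)%N.
Hypothesis col_sum : forall i y, \sum_x f i x y = t i.
Local Notation X := {dffun forall i, V i}.

Definition centered i x y : R := f i x y - t i / #|V i|%:R.
Arguments centered : clear implicits.
Let alpha := \sum_i t i / #|V i|%:R.
Definition cartesian_sum_mx : 'M[R]_#|X| :=
  fun_mx (fun a b : X => \sum_i f i (a i) (b i)).
Let lift_mx i : 'M[R]_#|X| := fun_mx (fun a b : X => centered i (a i) (b i)).

Lemma card_V_neq0 i : #|V i|%:R != 0 :> R.
Proof. by rewrite pnatr_eq0 -lt0n. Qed.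

Lemma centered_col i y : \sum_x centered i x y = 0.
Proof. by rewrite sumrB col_sum sum_div_card ?card_V_neq0 ?subrr. Qed.

Lemma fiber_size i (y : V i) :
  \sum_(x : X) (x i == y)%:R = #|X|%:R / #|V i|%:R :> R.
Proof.
apply: (mulIf (card_V_neq0 i)); rewrite divfK ?card_V_neq0 //.
have total : \sum_(z : V i) \sum_(x : X) (x i == z)%:R = #|X|%:R :> R.
  rewrite exchange_big /= -sumr_const; apply: eq_bigr => x _.
  rewrite (bigD1 (x i)) //= eqxx big1 ?addr0 // => z.
  by rewrite eq_sym => /negbTE ->.
rewrite -total [RHS](eq_bigr (fun=> \sum_(x : X) (x i == y)%:R)) => [|z _].
  by rewrite sumr_const mulr_natr.
exact: fiber_size_eq.
Qed.

Lemma cartesian_sum_decomp :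
  cartesian_sum_mx = const_mx alpha + \sum_i lift_mx i.
Proof.
rewrite -(@fun_mx_const _ X X) -fun_mx_sum -fun_mxD; apply: eq_fun_mx => a b.
rewrite /alpha -big_split /=; apply: eq_bigr => i _.
by rewrite /centered addrC subrK.
Qed.

Lemma const_mulmx_lift i : (const_mx alpha : 'M_#|X|) *m lift_mx i = 0.
Proof.
rewrite -(@fun_mx_const _ X X) fun_mxM; apply: fun_mx_eq0 => a b.
exact: (@sum_mul_coord_eq0 _ _ _ i (fun=> alpha) _ (fun _ _ => erefl)
  (centered_col (b i))).
Qed.

Lemma lift_mulmx_lift i j : i != j -> lift_mx i *m lift_mx j = 0.
Proof.
move=> ij; rewrite fun_mxM; apply: fun_mx_eq0 => a b.
have phi_upd x w : centered i (a i) (upd x j w i) = centered i (a i) (x i).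
  by rewrite upd_other // eq_sym.
exact: (@sum_mul_coord_eq0 _ _ _ j (fun x => centered i (a i) (x i)) _ phi_upd
  (centered_col (b j))).
Qed.

Lemma char_poly_cartesian_sum :
  'X^(#|X| * k) * char_poly cartesian_sum_mx =
  char_poly (const_mx alpha : 'M_#|X|) * \prod_i char_poly (lift_mx i).
Proof.
rewrite cartesian_sum_decomp -[k in 'X^(_ * k)]card_ord.
exact: char_poly_big_mulmx0 const_mulmx_lift lift_mulmx_lift.
Qed.

Lemma char_poly_lift i :
  'X^#|V i| * char_poly (lift_mx i) =
  'X^#|X| * char_poly ((#|X|%:R / #|V i|%:R) *: fun_mx (centered i)).
Proof.
have -> : lift_mx i = incidence_mx R (fun x : X => x i) *m
    (fun_mx (centered i) *m (incidence_mx R (fun x : X => x i))^T).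
  by rewrite mulmxA -fun_mx_pullback.
rewrite char_poly_mulmxC -mulmxA (incidence_mx_gram (@fiber_size i)).
by rewrite mul_mx_scalar.
Qed.

Lemma char_poly_centered i :
  'X * char_poly (fun_mx (f i)) =
  ('X - (t i)%:P) * char_poly (fun_mx (centered i)).
Proof.
have decomp : fun_mx (f i) = const_mx (t i / #|V i|%:R) + fun_mx (centered i).
  by rewrite -fun_mx_const -fun_mxD; apply: eq_fun_mx => x y; rewrite addrC subrK.
have const_mul :
    (const_mx (t i / #|V i|%:R) : 'M_#|V i|) *m fun_mx (centered i) = 0.
  rewrite -(@fun_mx_const _ (V i) (V i)) fun_mxM; apply: fun_mx_eq0 => x y.
  by rewrite -mulr_sumr centered_col mulr0.
have := char_poly_const #|V i| (t i / #|V i|%:R).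
rewrite -[_ / _ *+ _]mulr_natr divfK ?card_V_neq0 // => const_poly.
apply: (@mulfI _ 'X^#|V i|); first by rewrite monic_neq0 ?monicXn.
by rewrite mulrCA decomp char_polyD_mulmx0 // mulrA const_poly -mulrA.
Qed.

Section SignCount.
Variable P : pred R.
Hypothesis P0 : ~~ P 0.
Hypothesis P_scale : forall c x, 0 < c -> P (c * x) = P x.

Lemma nroots_lift i :
  nroots P (char_poly (lift_mx i)) = nroots P (char_poly (fun_mx (centered i))).
Proof.
have := congr1 (nroots P) (char_poly_lift i).
rewrite !nrootsM ?char_poly_neq0 ?Xn_neq0 // !nroots_Xn // !add0n => ->.
have m_gt0 : 0 < #|X|%:R / #|V i|%:R :> R.
  by rewrite divr_gt0 // ltr0n ?V_gt0 // card_dffun_gt0.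
rewrite char_polyZ ?gt_eqF // nrootsZ ?expf_neq0 ?gt_eqF //.
by rewrite nroots_comp_scale ?invr_eq0 ?gt_eqF // => x; rewrite P_scale ?invr_gt0.
Qed.

Lemma nroots_centered i :
  nroots P (char_poly (fun_mx (f i))) =
  (P (t i) + nroots P (char_poly (fun_mx (centered i))))%N.
Proof.
have := congr1 (nroots P) (char_poly_centered i).
rewrite !nrootsM ?polyX_eq0 ?polyXsubC_eq0 ?char_poly_neq0 //.
by rewrite -['X]expr1 nroots_Xn // nroots_XsubC.
Qed.

Lemma nroots_cartesian_sum :
  (nroots P (char_poly cartesian_sum_mx) + \sum_i P (t i) =
   P (alpha *+ #|X|) + \sum_i nroots P (char_poly (fun_mx (f i))))%N.
Proof.
have prod_neq0 : \prod_i char_poly (lift_mx i) != 0.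
  by apply/prodf_neq0 => i _; apply: char_poly_neq0.
have := congr1 (nroots P) char_poly_cartesian_sum.
rewrite nrootsM ?char_poly_neq0 ?Xn_neq0 // nroots_Xn // add0n.
rewrite (nrootsM _ (char_poly_neq0 _) prod_neq0).
rewrite (nroots_char_poly_const _ alpha P0).
rewrite nroots_prod => [->|i]; last exact: char_poly_neq0.
rewrite -addnA -big_split /=; congr (_ + _)%N; apply: eq_bigr => i _.
by rewrite nroots_lift nroots_centered addnC.
Qed.

End SignCount.

Hypothesis t_gt0 : forall i, 0 < t i.

Lemma n_neg_cartesian_sum :
  n_neg cartesian_sum_mx = (\sum_i n_neg (fun_mx (f i)))%N.
Proof.
have := @nroots_cartesian_sum (fun x => x < 0) (negbT (ltxx 0))
  (fun c x c_gt0 => pmulr_rlt0 x c_gt0).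
have alpha_ge0 : 0 <= alpha.
  by apply: sumr_ge0 => i _; rewrite divr_ge0 ?ler0n // ltW.
rewrite ltNge mulrn_wge0 // big1 => [|i _]; last by rewrite lt_gtF.
by rewrite addn0 => count_neg; exact: count_neg.
Qed.

Lemma n_pos_cartesian_sum : (0 < k)%N ->
  (n_pos cartesian_sum_mx)%:Z = 1 + \sum_i ((n_pos (fun_mx (f i)))%:Z - 1).
Proof.
move=> k_gt0.
have := @nroots_cartesian_sum (fun x => 0 < x) (negbT (ltxx 0))
  (fun c x c_gt0 => pmulr_rgt0 x c_gt0).
have alpha_gt0 : 0 < alpha.
  apply: (psumr_gt0 (i0 := Ordinal k_gt0)) => [i|].
    by rewrite divr_ge0 ?ler0n // ltW.
  by rewrite divr_gt0 ?ltr0n.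
rewrite pmulrn_lgt0 ?card_dffun_gt0 // alpha_gt0.
rewrite (eq_bigr (fun=> 1%N)) => [|i _]; last by rewrite t_gt0.
rewrite sum1_card card_ord => /(congr1 Posz).
rewrite !PoszD (big_morph Posz PoszD (erefl _)) sumrB sumr_const card_ord natz.
by move=> count_pos; apply: (addIr (Posz k)); rewrite -addrA subrK.
Qed.

End CartesianSum.

Lemma distmx_col_sum (R : comNzRingType) (V : finType) (e : rel V) j0 :
  simple_graph e -> const_row_sums (distmx R e) ->
  forall y, \sum_x (gdist e x y)%:R = \sum_j distmx R e j0 j.
Proof.
move=> [sym_e _] [c row_c] y; rewrite row_c.
rewrite -(@fun_mx_row_sum _ _ (fun x y => (gdist e x y)%:R) _ row_c y).
by apply: eq_bigr => x _; rewrite gdistC.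
Qed.

Lemma gdist_col_sum_gt0 (R : numDomainType) (V : finType) (e : rel V) c :
  connected_graph e -> (1 < #|V|)%N ->
  (forall y, \sum_x (gdist e x y)%:R = c) -> 0 < c :> R.
Proof.
move=> conn /card_gt1P[a [b [_ _ ab]]] col_c; rewrite -(col_c b).
apply: (psumr_gt0 (i0 := a)) => [x|]; first exact: ler0n.
by have [z _ ->] := gdist_descent (conn a b) ab.
Qed.

Lemma distmx_cprod (R : rcfType) k (V : 'I_k -> finType)
    (e : forall i, rel (V i)) :
  (forall i, connected_graph (e i)) ->
  distmx R (cprod_rel e) =
  cartesian_sum_mx (fun i (x y : V i) => (gdist (e i) x y)%:R).
Proof.
by move=> conn; apply/matrixP => a b; rewrite !mxE (gdist_cprod conn) natr_sum.
Qed.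

Unset Implicit Arguments.

Theorem corollary7 (R : rcfType) (k : nat) (V : 'I_k -> finType)
  (e : forall i, rel (V i)) :
  (0 < k)%N ->
  (forall i, simple_graph (e i)) ->
  (forall i, connected_graph (e i)) ->
  (forall i, 1 < #|V i|)%N ->
  (forall i, const_row_sums (distmx R (e i))) ->
  n_neg (distmx R (cprod_rel e)) = (\sum_(i < k) n_neg (distmx R (e i)))%N /\
  (n_pos (distmx R (cprod_rel e)))%:Z =
    1 + \sum_(i < k) ((n_pos (distmx R (e i)))%:Z - 1).
Proof.
move=> k_gt0 simple conn card_gt1 row_const.
have V_gt0 i : (0 < #|V i|)%N by apply: ltnW.
pose t i := \sum_j distmx R (e i) (Ordinal (V_gt0 i)) j.
have col_sum i y : \sum_x (gdist (e i) x y)%:R = t i.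
  exact: distmx_col_sum (simple i) (row_const i) y.
have t_gt0 i : 0 < t i := gdist_col_sum_gt0 (conn i) (card_gt1 i) (col_sum i).
rewrite distmx_cprod //; split.
  exact: n_neg_cartesian_sum V_gt0 col_sum t_gt0.
exact: n_pos_cartesian_sum V_gt0 col_sum t_gt0 k_gt0.
Qed.
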